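(* Let $1\le m\le J$. Then (i) $|\hat\varphi_{[m],l}[n]|=|\hat\psi_{[m],l}[n]|$ for all $n$ and all $0\le l\le 2^m-1$; (ii) $\varphi_{[m],l}=H(\psi_{[m],l})$ whenever $1\le l\le 2^m-2$; (iii) for all $l,\lambda\in\{0,\dots,2^m-1\}$ and $p,s\in\{0,\dots,N/2^m-1\}$, $$\langle \varphi_{[m],l}[\cdot-2^m p],\,\varphi_{[m],\lambda}[\cdot-2^m s]\rangle=\delta_{l,\lambda}\,\delta_{p,s},$$ so $\{\varphi_{[m],l}[\cdot-2^m p]\}$ is an orthonormal basis of $\Pi[N]$.
   Context: Let $N=2^{J}$ with $J\ge 1$ an integer and $\omega=e^{2\pi i/N}$. $\Pi[N]$ denotes the real vector space of real-valued $N$-periodic sequences $x=\{x[k]\}_{k\in\mathbb Z}$, with inner product $\langle x,y\rangle=\sum_{k=0}^{N-1}x[k]y[k]$ and norm $\|x\|=\langle x,x\rangle^{1/2}$. The DFT of an $N$-periodic sequence is $\hat x[n]=\sum_{k=0}^{N-1}x[k]\omega^{-kn}$, with inverse $x[k]=\frac1N\sum_{n=0}^{N-1}\hat x[n]\omega^{kn}$. For $x\in\Pi[N]$, its discrete periodic Hilbert transform $H(x)\in\Pi[N]$ has DFT $\widehat{H(x)}[n]=-i\hat x[n]$ for $0<n<N/2$, $=i\hat x[n]$ for $N/2<n<N$, and $=0$ for $n\in\{0,N/2\}$ (indices mod $N$). Discrete-spline wavelet packets: fix an integer $r\ge1$; let $U[n]=\tfrac12\big(\cos^{4r}\tfrac{\pi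 n}{N}+\sin^{4r}\tfrac{\pi n}{N}\big)$, $\beta[n]=\cos^{2r}\tfrac{\pi n}{N}/\sqrt{U[n]}$, $\alpha[n]=\omega^{n}\sin^{2r}\tfrac{\pi n}{N}/\sqrt{U[n]}$, and $\gamma_0=\beta$, $\gamma_1=\alpha$. The wavelet packets $\psi_{[m],l}\in\Pi[N]$, $1\le m\le J$, $0\le l\le 2^m-1$, are defined by their DFTs: $\hat\psi_{[1],0}=\beta$, $\hat\psi_{[1],1}=\alpha$, and for $1\le m<J$, $\lambda\in\{0,\dots,2^m-1\}$, $\mu\in\{0,1\}$: $\hat\psi_{[m+1],\rho}[n]=\gamma_\mu[2^m n]\,\hat\psi_{[m],\lambda}[n]$, where $\rho=2\lambda+\mu$ if $\lambda$ is even and $\rho=2\lambda+1-\mu$ if $\lambda$ is odd. Known facts (may be assumed): for each $m$, $\{\psi_{[m],l}[\cdot-2^m p]:0\le l\le 2^m-1,\,0\le p<N/2^m\}$ is an orthonormal basis of $\Pi[N]$; $\hat\psi_{[m],l}[0]=0$ for $l\ne0$, and $\hat\psi_{[m],l}[N/2]=0$ for $l\neq 2^m-1$. Complementary wavelet packets: $\varphi_{[m],l}\in\Pi[N]$ is defined by its DFT $\hat\varphi_{[m],l}[n]=-i\hat\psi_{[m],l}[n]$ for $0<n<N/2$, $=i\hat\psi_{[m],l}[n]$ for $N/2<n<N$, and $=\hat\psi_{[m],l}[n]$ for $n\in\{0,N/2\}$. *)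

From Stdlib Require Import Reals Lra Lia ZArith Arith Bool.
Open Scope R_scope.

Definition C : Type := (R * R)%type.
Definition Cre (z : C) : R := fst z.
Definition Cim (z : C) : R := snd z.
Definition RtoC (a : R) : C := (a, 0).
Definition C0 : C := (0, 0).
Definition C1 : C := (1, 0).
Definition Ci : C := (0, 1).
Definition Cadd (z w : C) : C := (fst z + fst w, snd z + snd w).
Definition Copp (z : C) : C := (- fst z, - snd z).
Definition Cmul (z w : C) : C :=
  (fst z * fst w - snd z * snd w, fst z * snd w + snd z * fst w).
Definition Cscale (a : R) (z : C) : C := (a * fst z, a * snd z).
Definition Cmod (z : C) : R := sqrt (fst z ^ 2 + snd z ^ 2).
Definition Cexp_i (t : R) : C := (cos t, sin t).

Fixpoint rsum (n : nat) (f : nat -> R) : R :=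
  match n with O => 0 | S n' => rsum n' f + f n' end.
Fixpoint csum (n : nat) (f : nat -> C) : C :=
  match n with O => C0 | S n' => Cadd (csum n' f) (f n') end.

Definition Nn (J : nat) : nat := (2 ^ J)%nat.
Definition NR (J : nat) : R := INR (Nn J).

(** omega^(k) = e^{2 pi i k / N}, for an integer exponent given as a real *)
Definition omega_pow (J : nat) (e : R) : C := Cexp_i (2 * PI * e / NR J).

(** N-periodic real sequences: elements of Pi[N] *)
Definition periodic (J : nat) (x : Z -> R) : Prop :=
  forall k : Z, x (k + Z.of_nat (Nn J))%Z = x k.

Definition DFT (J : nat) (x : Z -> R) (n : nat) : C :=
  csum (Nn J) (fun k => Cscale (x (Z.of_nat k)) (omega_pow J (- (INR k * INR n)))).

Definition inner (J : nat) (x y : Z -> R) : R :=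
  rsum (Nn J) (fun k => x (Z.of_nat k) * y (Z.of_nat k)).
Definition tshift (x : Z -> R) (a : Z) : Z -> R := fun k => x (k - a)%Z.

(** H(x) is the (real) sequence whose DFT is hmult n * xhat[n], given by the
    inverse DFT (its imaginary part vanishes for real x; we take the real part). *)
Definition hmult (J : nat) (n : nat) : C :=
  let n' := (n mod Nn J)%nat in
  let h := (Nn J / 2)%nat in
  if (0 <? n')%nat && (n' <? h)%nat then Copp Ci
  else if (h <? n')%nat then Ci
  else C0.

Definition Hilbert (J : nat) (x : Z -> R) : Z -> R := fun k =>
  / NR J * Cre (csum (Nn J) (fun n =>
     Cmul (Cmul (hmult J n) (DFT J x n)) (omega_pow J (IZR k * INR n)))).

Definition Uf (J r : nat) (n : nat) : R :=
  / 2 * (cos (PI * INR n / NR J) ^ (4 * r) + sin (PI * INR n / NR J) ^ (4 * r)).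
Definition betaf (J r : nat) (n : nat) : C :=
  RtoC (cos (PI * INR n / NR J) ^ (2 * r) / sqrt (Uf J r n)).
Definition alphaf (J r : nat) (n : nat) : C :=
  Cscale (sin (PI * INR n / NR J) ^ (2 * r) / sqrt (Uf J r n)) (omega_pow J (INR n)).
Definition gammaf (J r : nat) (mu : nat) (n : nat) : C :=
  if (mu =? 0)%nat then betaf J r n else alphaf J r n.

(** mu determined by rho: rho = 2 lambda + mu (lambda even),
    rho = 2 lambda + 1 - mu (lambda odd), lambda = rho / 2. *)
Definition mu_of (rho : nat) : nat :=
  if Nat.even (rho / 2) then (rho mod 2)%nat else (1 - rho mod 2)%nat.

(** psihat m l n.  Level 0 is an auxiliary constant 1, so that level 1 gives
    psihat 1 0 = beta and psihat 1 1 = alpha, and for m >= 1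
    psihat (m+1) rho n = gamma_mu [2^m n] * psihat m lambda n. *)
Fixpoint psihat (J r : nat) (m : nat) (rho : nat) (n : nat) : C :=
  match m with
  | O => C1
  | S m' => Cmul (gammaf J r (mu_of rho) (2 ^ m' * n)%nat) (psihat J r m' (rho / 2) n)
  end.

Definition phihat (J r : nat) (m l : nat) (n : nat) : C :=
  let n' := (n mod Nn J)%nat in
  let h := (Nn J / 2)%nat in
  if (0 <? n')%nat && (n' <? h)%nat then Cmul (Copp Ci) (psihat J r m l n)
  else if (h <? n')%nat then Cmul Ci (psihat J r m l n)
  else psihat J r m l n.

(** The complementary packet [phi_[m],l] is obtained from [psi_[m],l] by
    multiplying its DFT by the unimodular phase [-i / i / 1] (on the low half,
    high half, and at the frequencies 0, N/2).  The proof rests on four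
    general facts about N-periodic sequences, established first:
    - DFT inversion, the shift theorem and Parseval's identity, derived from
      the orthogonality of the powers of [omega] (sum of roots of unity);
    - hence a unimodular DFT multiplier commutes with translations and
      preserves inner products, which gives (i) and the orthonormality (iii);
    - a sequence whose DFT is [hmult * yhat] is the Hilbert transform of [y],
      which gives (ii) once we know that [psihat_[m],l] vanishes at 0 and N/2
      for [1 <= l <= 2^m - 2] (where the phase and [hmult] disagree);
    - N orthonormal vectors of Pi[N] form a basis (rows orthonormal implies
      columns orthonormal, taken from MathComp's matrices), which gives the
      expansion of every [x] in the shifted complementary packets. *)
From Pilot Require Import Defs.
From Stdlib Require Import Reals ZArith Arith Bool Lra Lia.
(* Re-import Defs so that [C] denotes its complex numbers, not the binomial
   coefficient of Reals. *)
Import Defs.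
Open Scope R_scope.

Definition Cconj (z : C) : C := (fst z, - snd z).

Ltac Cexpand :=
  repeat match goal with z : C |- _ => destruct z end;
  unfold Cadd, Cmul, Copp, Cscale, RtoC, C0, C1, Ci, Cconj, Cre, Cim in *; simpl in *;
  f_equal.
Ltac Csolve := Cexpand; ring.

Lemma Cadd_0_l z : Cadd C0 z = z. Proof. Csolve. Qed.
Lemma Cadd_0_r z : Cadd z C0 = z. Proof. Csolve. Qed.
Lemma Cmul_assoc a b c : Cmul a (Cmul b c) = Cmul (Cmul a b) c. Proof. Csolve. Qed.
Lemma Cscale_RtoC a z : Cscale a z = Cmul (RtoC a) z. Proof. Csolve. Qed.
Lemma Cmul_0_l z : Cmul C0 z = C0. Proof. Csolve. Qed.
Lemma Cmul_0_r z : Cmul z C0 = C0. Proof. Csolve. Qed.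

Definition unimodular (u : C) : Prop := fst u ^ 2 + snd u ^ 2 = 1.

Lemma Cmod_unimodular u z : unimodular u -> Cmod (Cmul u z) = Cmod z.
Proof.
  destruct u as [a b], z as [x y]; unfold unimodular, Cmod, Cmul; cbn [fst snd]; intros Hu.
  f_equal. transitivity ((a ^ 2 + b ^ 2) * (x ^ 2 + y ^ 2)); [ring | rewrite Hu; ring].
Qed.

Lemma unimodular_mul_conj u z1 z2 :
  unimodular u -> Cmul (Cmul u z1) (Cconj (Cmul u z2)) = Cmul z1 (Cconj z2).
Proof.
  destruct u as [a b]; unfold unimodular; cbn [fst snd]; intros Hu.
  transitivity (Cscale (a ^ 2 + b ^ 2) (Cmul z1 (Cconj z2))); [Csolve | rewrite Hu; Csolve].
Qed.

Lemma Cmul_eq_0_r u s : Cmul u s = C0 -> u <> C0 -> s = C0.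
Proof.
  destruct u as [a b], s as [s t]; unfold Cmul, C0; simpl; intros H Hu.
  injection H; intros H2 H1.
  assert (Hn : a * a + b * b <> 0).
  { intro E. apply Hu. assert (a = 0) by nra. assert (b = 0) by nra. subst; auto. }
  assert (Es : s * (a * a + b * b) = a * (a * s - b * t) + b * (a * t + b * s)) by ring.
  assert (Et : t * (a * a + b * b) = a * (a * t + b * s) - b * (a * s - b * t)) by ring.
  rewrite H1, H2 in Es, Et.
  f_equal; apply (Rmult_eq_reg_r (a * a + b * b)); auto; lra.
Qed.

Lemma csum_ext n f g : (forall i, (i < n)%nat -> f i = g i) -> csum n f = csum n g.
Proof. induction n; simpl; intros H; auto. rewrite IHn, H; auto. Qed.
Lemma rsum_ext n f g : (forall i, (i < n)%nat -> f i = g i) -> rsum n f = rsum n g.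
Proof. induction n; simpl; intros H; auto. rewrite IHn, H; auto. Qed.

Lemma csum_add n f g : csum n (fun i => Cadd (f i) (g i)) = Cadd (csum n f) (csum n g).
Proof. induction n; simpl; [Csolve | rewrite IHn; Csolve]. Qed.
Lemma rsum_add n f g : rsum n (fun i => f i + g i) = rsum n f + rsum n g.
Proof. induction n; simpl; [ring | rewrite IHn; ring]. Qed.

Lemma csum_exchange n m (f : nat -> nat -> C) :
  csum n (fun i => csum m (fun j => f i j)) = csum m (fun j => csum n (fun i => f i j)).
Proof.
  induction n; simpl.
  - induction m; simpl; auto. rewrite <- IHm. Csolve.
  - rewrite IHn, <- csum_add. auto.
Qed.
Lemma rsum_exchange n m (f : nat -> nat -> R) :
  rsum n (fun i => rsum m (fun j => f i j)) = rsum m (fun j => rsum n (fun i => f i j)).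
Proof.
  induction n; simpl.
  - induction m; simpl; auto. rewrite <- IHm. ring.
  - rewrite IHn, <- rsum_add. auto.
Qed.

Lemma Cmul_csum_l c n f : Cmul c (csum n f) = csum n (fun i => Cmul c (f i)).
Proof. induction n; simpl; [Csolve | rewrite <- IHn; Csolve]. Qed.
Lemma Cmul_csum_r c n f : Cmul (csum n f) c = csum n (fun i => Cmul (f i) c).
Proof. induction n; simpl; [Csolve | rewrite <- IHn; Csolve]. Qed.
Lemma Cscale_csum a n f : Cscale a (csum n f) = csum n (fun i => Cscale a (f i)).
Proof. induction n; simpl; [Csolve | rewrite <- IHn; Csolve]. Qed.
Lemma Cconj_csum n f : Cconj (csum n f) = csum n (fun i => Cconj (f i)).
Proof. induction n; simpl; [Csolve | rewrite <- IHn; Csolve]. Qed.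
Lemma csum_RtoC n f : csum n (fun i => RtoC (f i)) = RtoC (rsum n f).
Proof. induction n; simpl; auto. rewrite IHn. Csolve. Qed.
Lemma rsum_mult_l c n f : c * rsum n f = rsum n (fun i => c * f i).
Proof. induction n; simpl; [ring | rewrite <- IHn; ring]. Qed.
Lemma rsum_mult_r c n f : rsum n f * c = rsum n (fun i => f i * c).
Proof. induction n; simpl; [ring | rewrite <- IHn; ring]. Qed.
Lemma csum_const_1 n : csum n (fun _ => C1) = RtoC (INR n).
Proof. induction n; simpl csum; [Csolve | rewrite IHn, S_INR; Csolve]. Qed.

Lemma csum_zero n f : (forall i, (i < n)%nat -> f i = C0) -> csum n f = C0.
Proof. induction n; simpl; intros H; auto. rewrite IHn, H; auto. Csolve. Qed.
Lemma rsum_zero n f : (forall i, (i < n)%nat -> f i = 0) -> rsum n f = 0.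
Proof. induction n; simpl; intros H; auto. rewrite IHn, H; auto. ring. Qed.

Lemma csum_single n f i0 : (i0 < n)%nat ->
  (forall i, (i < n)%nat -> i <> i0 -> f i = C0) -> csum n f = f i0.
Proof.
  induction n; intros Hi H; [lia | simpl].
  destruct (Nat.eq_dec i0 n) as [->|Hne].
  - rewrite csum_zero; [apply Cadd_0_l | intros; apply H; lia].
  - rewrite IHn, (H n); [apply Cadd_0_r | lia | lia | lia | intros; apply H; lia].
Qed.
Lemma rsum_single n f i0 : (i0 < n)%nat ->
  (forall i, (i < n)%nat -> i <> i0 -> f i = 0) -> rsum n f = f i0.
Proof.
  induction n; intros Hi H; [lia | simpl].
  destruct (Nat.eq_dec i0 n) as [->|Hne].
  - rewrite rsum_zero; [ring | intros; apply H; lia].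
  - rewrite IHn, (H n); [ring | lia | lia | lia | intros; apply H; lia].
Qed.

Lemma rsum_blocks a b g :
  rsum (a * b) g = rsum a (fun l => rsum b (fun p => g (l * b + p)%nat)).
Proof.
  assert (Happ : forall c d, rsum (c + d) g = rsum c g + rsum d (fun p => g (c + p)%nat)).
  { intros c d. induction d; simpl.
    - rewrite Nat.add_0_r; ring.
    - rewrite Nat.add_succ_r; simpl. rewrite IHd; ring. }
  induction a; simpl; auto.
  replace (b + a * b)%nat with (a * b + b)%nat by lia.
  rewrite Happ, IHa. auto.
Qed.

(** Linear algebra: if the rows of a real [n x n] matrix are orthonormal, so
    are its columns ([A A^T = 1] implies [A^T A = 1]).  This is the only place
    where a dimension argument is needed; we borrow it from MathComp. *)
Module RowsToColumns.
From mathcomp Require Import ssreflect ssrfun ssrbool eqtype ssrnat fintype bigop.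
From mathcomp Require Import ssralg matrix Rstruct.
Local Open Scope ring_scope.

Lemma rsum_big n (f : nat -> R) : rsum n f = \sum_(i < n) f i.
Proof.
elim: n => [|n IH]; first by rewrite big_ord0.
by rewrite big_ord_recr /= IH.
Qed.

Lemma ord_eqb {n} (i j : 'I_n) : Nat.eqb i j = (i == j).
Proof.
case: Nat.eqb_spec => [e | ne]; first by rewrite (val_inj e) eqxx.
by apply/esym/eqP => ij; apply: ne; rewrite ij.
Qed.

Lemma orthonormal_columns (n : nat) (E : nat -> nat -> R) :
  (forall i j, (i < n)%coq_nat -> (j < n)%coq_nat ->
     rsum n (fun k => (E i k * E j k)%R) = if Nat.eqb i j then 1%R else 0%R) ->
  forall j k, (j < n)%coq_nat -> (k < n)%coq_nat ->
     rsum n (fun i => (E i j * E i k)%R) = if Nat.eqb j k then 1%R else 0%R.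
Proof.
move=> rows j k /ltP hj /ltP hk.
pose A := \matrix_(i < n, k < n) E i k.
have AAT : A *m A^T = 1%:M.
  apply/matrixP => i i'; rewrite !mxE.
  transitivity (rsum n (fun k => E i k * E i' k)).
    by rewrite rsum_big; apply: eq_bigr => l _; rewrite !mxE.
  by rewrite rows ?ord_eqb; [case: (i == i') | exact/ltP | exact/ltP].
have := mulmx1C AAT => /matrixP /(_ (Ordinal hj) (Ordinal hk)).
rewrite !mxE => ATA.
transitivity (\sum_(i < n) A^T (Ordinal hj) i * A i (Ordinal hk)).
  by rewrite rsum_big; apply: eq_bigr => i _; rewrite !mxE.
by rewrite ATA -(ord_eqb (Ordinal hj) (Ordinal hk)); case: Nat.eqb.
Qed.
End RowsToColumns.
(* Requiring MathComp switches bullets off globally; restore the default. *)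
Set Bullet Behavior "Strict Subproofs".

Lemma Nn_pos J : (0 < Nn J)%nat.
Proof. unfold Nn. apply Nat.neq_0_lt_0, Nat.pow_nonzero. lia. Qed.
Lemma NR_pos J : 0 < NR J.
Proof. apply lt_0_INR, Nn_pos. Qed.
Lemma NR_IZR J : IZR (Z.of_nat (Nn J)) = NR J.
Proof. unfold NR. rewrite INR_IZR_INZ; auto. Qed.

Lemma Cexp_i_period x q : Cexp_i (x + 2 * IZR q * PI) = Cexp_i x.
Proof.
  unfold Cexp_i. destruct q as [|p|p].
  - now rewrite Rmult_0_r, Rmult_0_l, Rplus_0_r.
  - replace (IZR (Zpos p)) with (INR (Pos.to_nat p))
      by (rewrite INR_IZR_INZ, positive_nat_Z; auto).
    now rewrite cos_period, sin_period.
  - replace x with ((x + 2 * IZR (Zneg p) * PI) + 2 * INR (Pos.to_nat p) * PI) at 3 4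
      by (rewrite INR_IZR_INZ, positive_nat_Z, <- Pos2Z.opp_pos, opp_IZR; ring).
    now rewrite cos_period, sin_period.
Qed.

Section RootsOfUnity.
Variable J : nat.
Notation N := (Nn J).
Notation W := (omega_pow J).

Lemma W_add a b : Cmul (W a) (W b) = W (a + b).
Proof.
  unfold omega_pow, Cexp_i, Cmul; simpl.
  replace (2 * PI * (a + b) / NR J) with (2 * PI * a / NR J + 2 * PI * b / NR J)
    by (unfold Rdiv; ring).
  rewrite cos_plus, sin_plus. f_equal; ring.
Qed.

Lemma W_conj a : Cconj (W a) = W (- a).
Proof.
  unfold omega_pow, Cexp_i, Cconj; simpl.
  replace (2 * PI * - a / NR J) with (- (2 * PI * a / NR J)) by (unfold Rdiv; ring).
  rewrite cos_neg, sin_neg; auto.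
Qed.

Lemma W_period a q : W (a + IZR q * NR J) = W a.
Proof.
  pose proof (NR_pos J). unfold omega_pow.
  rewrite <- (Cexp_i_period (2 * PI * a / NR J) q). f_equal. field. lra.
Qed.

Lemma W_0 : W 0 = C1.
Proof. unfold omega_pow, Cexp_i, Rdiv. rewrite Rmult_0_r, Rmult_0_l, cos_0, sin_0. auto. Qed.

Lemma W_multiple q : W (IZR q * NR J) = C1.
Proof. rewrite <- (Rplus_0_l (IZR q * NR J)), W_period. apply W_0. Qed.

Lemma W_ne_1 r : (0 < r < Z.of_nat N)%Z -> W (IZR r) <> C1.
Proof.
  intros Hr. pose proof (NR_pos J). pose proof PI_RGT_0.
  assert (Hr1 : 0 < IZR r) by (apply IZR_lt; lia).
  assert (Hr2 : IZR r < NR J) by (rewrite <- NR_IZR; apply IZR_lt; lia).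
  set (t := 2 * IZR r / NR J).
  assert (Ht : 0 < t < 2) by (unfold t; split;
    [apply Rdiv_lt_0_compat; lra | apply Rmult_lt_reg_r with (NR J); auto;
     unfold Rdiv; rewrite Rmult_assoc, Rinv_l; lra]).
  unfold omega_pow, Cexp_i, C1.
  replace (2 * PI * IZR r / NR J) with (PI * t) by (unfold t; field; lra).
  intros E. injection E as Hc Hs.
  destruct (Rtotal_order t 1) as [T|[T|T]].
  - assert (0 < sin (PI * t)) by (apply sin_gt_0; nra). lra.
  - rewrite T, Rmult_1_r, cos_PI in Hc. lra.
  - assert (sin (PI * t) < 0) by (apply sin_lt_0; nra). lra.
Qed.

Fixpoint Cpow (z : C) (n : nat) : C := match n with O => C1 | S n => Cmul (Cpow z n) z end.

Lemma Cpow_C1 n : Cpow C1 n = C1.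
Proof. induction n; simpl; auto. rewrite IHn. Csolve. Qed.

Lemma W_nat a n : W (a * INR n) = Cpow (W a) n.
Proof.
  induction n; simpl Cpow.
  - rewrite Rmult_0_r. apply W_0.
  - rewrite S_INR, <- IHn, W_add. f_equal; ring.
Qed.

Lemma geometric_sum z n : Cmul (Cadd z (Copp C1)) (csum n (Cpow z)) = Cadd (Cpow z n) (Copp C1).
Proof.
  induction n; simpl csum; simpl Cpow.
  - Csolve.
  - transitivity (Cadd (Cmul (Cadd z (Copp C1)) (csum n (Cpow z)))
                       (Cmul (Cadd z (Copp C1)) (Cpow z n))); [Csolve|].
    rewrite IHn. generalize (Cpow z n). intros. Csolve.
Qed.

Lemma sum_roots_of_unity d :
  csum N (fun n => W (IZR d * INR n)) =
  if Z.eqb (d mod Z.of_nat N) 0 then RtoC (NR J) else C0.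
Proof.
  pose proof (Nn_pos J) as HN.
  set (ZN := Z.of_nat N).
  pose proof (Z.div_mod d ZN ltac:(lia)) as Hd.
  pose proof (Z.mod_pos_bound d ZN ltac:(lia)) as Hr.
  assert (Wd : W (IZR d) = W (IZR (d mod ZN))).
  { rewrite Hd at 1. rewrite plus_IZR, mult_IZR. unfold ZN. rewrite NR_IZR.
    rewrite <- (W_period (IZR (d mod Z.of_nat N)) (d / Z.of_nat N)). f_equal; ring. }
  destruct (Z.eqb_spec (d mod ZN) 0) as [E|E].
  - rewrite (csum_ext _ _ (fun _ => C1)) by
      (intros i _; rewrite W_nat, Wd, E, W_0; apply Cpow_C1).
    apply csum_const_1.
  - rewrite (csum_ext _ _ (Cpow (W (IZR d)))) by (intros; apply W_nat).
    apply (Cmul_eq_0_r (Cadd (W (IZR d)) (Copp C1))).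
    + rewrite geometric_sum, <- W_nat, INR_IZR_INZ, <- mult_IZR.
      replace (IZR (d * Z.of_nat N)) with (IZR d * NR J) by (rewrite mult_IZR, NR_IZR; auto).
      rewrite W_multiple. Csolve.
    + rewrite Wd. intros E1. apply (W_ne_1 (d mod ZN)); [lia|].
      generalize (W (IZR (d mod ZN))) E1. intros [a b] Hz.
      unfold Cadd, Copp, C1, C0 in *; simpl in *. injection Hz as H1 H2. f_equal; lra.
Qed.
End RootsOfUnity.

Lemma mod_sub_eq_0_iff (N k j : Z) : (0 < N)%Z -> (0 <= j < N)%Z ->
  ((k - j) mod N = 0)%Z <-> j = (k mod N)%Z.
Proof.
  intros HN Hj.
  rewrite <- Zminus_mod_idemp_l.
  pose proof (Z.mod_pos_bound k N HN).
  destruct (Z_le_gt_dec j (k mod N)).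
  - rewrite Z.mod_small by lia. lia.
  - rewrite <- (Z_mod_plus_full (k mod N - j) 1 N), Z.mod_small by lia. lia.
Qed.

Section DFT.
Variable J : nat.
Notation N := (Nn J).
Notation W := (omega_pow J).

Lemma periodic_Z x q a : periodic J x -> x (a + q * Z.of_nat N)%Z = x a.
Proof.
  intros Hx.
  assert (Hnat : forall n b, x (b + Z.of_nat n * Z.of_nat N)%Z = x b).
  { induction n; intros b.
    - f_equal; lia.
    - rewrite <- (IHn b), <- (Hx (b + Z.of_nat n * Z.of_nat N)%Z). f_equal; lia. }
  destruct (Z_le_gt_dec 0 q).
  - rewrite <- (Z2Nat.id q) by lia. apply Hnat.
  - rewrite <- (Hnat (Z.to_nat (- q))). f_equal. lia.
Qed.

Lemma periodic_mod x k : periodic J x -> x k = x (k mod Z.of_nat N)%Z.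
Proof.
  intros Hx. pose proof (Nn_pos J).
  rewrite (Z.div_mod k (Z.of_nat N)) at 1 by lia.
  rewrite Z.add_comm, Z.mul_comm. apply periodic_Z; auto.
Qed.

Lemma tshift_periodic x a : periodic J x -> periodic J (tshift x a).
Proof. unfold periodic, tshift; intros H k. rewrite <- (H (k - a)%Z). f_equal; lia. Qed.

Lemma select_by_root_sums (f : nat -> C) (k : Z) :
  csum N (fun j => Cmul (f j) (csum N (fun n => W (IZR (k - Z.of_nat j) * INR n))))
  = Cscale (NR J) (f (Z.to_nat (k mod Z.of_nat N))).
Proof.
  pose proof (Nn_pos J) as HN.
  pose proof (Z.mod_pos_bound k (Z.of_nat N) ltac:(lia)) as Hb.
  rewrite (csum_single _ _ (Z.to_nat (k mod Z.of_nat N))).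
  - rewrite sum_roots_of_unity, Z2Nat.id by lia.
    replace ((k - k mod Z.of_nat N) mod Z.of_nat N =? 0)%Z with true.
    + Csolve.
    + symmetry. apply Z.eqb_eq, mod_sub_eq_0_iff; lia.
  - lia.
  - intros j Hj Hne. rewrite sum_roots_of_unity.
    replace ((k - Z.of_nat j) mod Z.of_nat N =? 0)%Z with false.
    + apply Cmul_0_r.
    + symmetry. apply Z.eqb_neq. rewrite mod_sub_eq_0_iff by lia. lia.
Qed.

Lemma dft_inversion x k : periodic J x ->
  csum N (fun n => Cmul (DFT J x n) (W (IZR k * INR n))) = RtoC (NR J * x k).
Proof.
  intros Hx. unfold DFT.
  transitivity (csum N (fun n => csum N (fun j =>
     Cmul (RtoC (x (Z.of_nat j))) (W (IZR (k - Z.of_nat j) * INR n))))).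
  { apply csum_ext; intros n _. rewrite Cmul_csum_r. apply csum_ext; intros j _.
    rewrite Cscale_RtoC, <- Cmul_assoc, W_add. f_equal. f_equal.
    rewrite minus_IZR, <- INR_IZR_INZ; ring. }
  rewrite csum_exchange.
  rewrite (csum_ext _ _ (fun j => Cmul (RtoC (x (Z.of_nat j)))
     (csum N (fun n => W (IZR (k - Z.of_nat j) * INR n))))) by
    (intros; rewrite Cmul_csum_l; auto).
  rewrite select_by_root_sums, Z2Nat.id, <- periodic_mod; auto.
  - Csolve.
  - apply Z.mod_pos_bound. pose proof (Nn_pos J). lia.
Qed.

Lemma root_sum_opp d :
  csum N (fun n => W (IZR (- d) * INR n)) = csum N (fun n => W (IZR d * INR n)).
Proof.
  rewrite !sum_roots_of_unity.
  destruct (Z.eqb_spec (d mod Z.of_nat N) 0) as [E|E].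
  - now rewrite Z.mod_opp_l_z, Z.eqb_refl by (pose proof (Nn_pos J); lia).
  - rewrite Z.mod_opp_l_nz by (pose proof (Nn_pos J); lia).
    pose proof (Z.mod_pos_bound d (Z.of_nat N) ltac:(pose proof (Nn_pos J); lia)).
    replace (Z.of_nat N - d mod Z.of_nat N =? 0)%Z with false; auto.
    symmetry; apply Z.eqb_neq; lia.
Qed.

Lemma dft_shift x a n : periodic J x -> (n < N)%nat ->
  DFT J (tshift x a) n = Cmul (W (- (IZR a * INR n))) (DFT J x n).
Proof.
  intros Hx Hn. pose proof (NR_pos J) as HNR.
  set (P := fun m => Cmul (W (- (IZR a * INR m))) (DFT J x m)). change (DFT J (tshift x a) n = P n).
  (* expand each x[t - a] by inversion *)
  transitivity (csum N (fun t => Cscale (/ NR J) (csum N (fun m =>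
     Cmul (P m) (W (IZR (Z.of_nat m - Z.of_nat n) * INR t)))))).
  { unfold DFT at 1, tshift. apply csum_ext; intros t _.
    transitivity (Cscale (/ NR J) (Cmul (RtoC (NR J * x (Z.of_nat t - a)%Z))
                                        (W (- (INR t * INR n))))).
    { generalize (W (- (INR t * INR n))). intros. Cexpand; field; lra. }
    rewrite <- (dft_inversion x _ Hx), Cmul_csum_r, !Cscale_csum.
    apply csum_ext; intros m _. unfold P.
    rewrite <- Cmul_assoc, W_add.
    replace (IZR (Z.of_nat t - a) * INR m + - (INR t * INR n))
      with (- (IZR a * INR m) + IZR (Z.of_nat m - Z.of_nat n) * INR t)
      by (rewrite !minus_IZR, <- !INR_IZR_INZ; ring).
    rewrite <- W_add.
    generalize (DFT J x m) (W (- (IZR a * INR m))) (W (IZR (Z.of_nat m - Z.of_nat n) * INR t)).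
    intros. Csolve. }
  (* then sum over t first: only m = n survives *)
  rewrite <- Cscale_csum, csum_exchange.
  rewrite (csum_ext _ _ (fun m => Cmul (P m)
     (csum N (fun t => W (IZR (Z.of_nat n - Z.of_nat m) * INR t))))).
  - rewrite select_by_root_sums, Zmod_small, Nat2Z.id by lia.
    generalize (P n). intros. Cexpand; field; lra.
  - intros m _. rewrite <- Cmul_csum_l. f_equal.
    replace (Z.of_nat m - Z.of_nat n)%Z with (- (Z.of_nat n - Z.of_nat m))%Z by lia.
    apply root_sum_opp.
Qed.

Lemma parseval x y : periodic J x -> periodic J y ->
  NR J * inner J x y = Cre (csum N (fun n => Cmul (DFT J x n) (Cconj (DFT J y n)))).
Proof.
  intros Hx Hy.
  (* conj(yhat[n]) = sum_j y[j] omega^{j n}; sum over n first and invert *)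
  transitivity (Cre (csum N (fun j => Cmul (RtoC (y (Z.of_nat j)))
     (csum N (fun n => Cmul (DFT J x n) (W (IZR (Z.of_nat j) * INR n))))))).
  - rewrite (csum_ext _ _ (fun j => RtoC (NR J * x (Z.of_nat j) * y (Z.of_nat j)))).
    + rewrite csum_RtoC. unfold inner, Cre, RtoC; simpl.
      rewrite rsum_mult_l. apply rsum_ext; intros; ring.
    + intros j _. rewrite dft_inversion by auto. Csolve.
  - f_equal.
    rewrite (csum_ext _ _ (fun j => csum N (fun n => Cmul (RtoC (y (Z.of_nat j)))
       (Cmul (DFT J x n) (W (IZR (Z.of_nat j) * INR n)))))) by (intros; apply Cmul_csum_l).
    rewrite csum_exchange. apply csum_ext; intros n _.
    set (X := DFT J x n). unfold DFT. rewrite Cconj_csum, Cmul_csum_l.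
    apply csum_ext; intros j _.
    replace (W (IZR (Z.of_nat j) * INR n)) with (Cconj (W (- (INR j * INR n))))
      by (rewrite W_conj; f_equal; rewrite INR_IZR_INZ; ring).
    generalize (W (- (INR j * INR n))). intros. Csolve.
Qed.
End DFT.

Section Consequences.
Variable J : nat.
Notation N := (Nn J).

Lemma inner_unimodular_multiplier (u : nat -> C) (x x' y y' : Z -> R) :
  periodic J x -> periodic J x' -> periodic J y -> periodic J y' ->
  (forall n, (n < N)%nat -> unimodular (u n)) ->
  (forall n, (n < N)%nat -> DFT J x n = Cmul (u n) (DFT J y n)) ->
  (forall n, (n < N)%nat -> DFT J x' n = Cmul (u n) (DFT J y' n)) ->
  inner J x x' = inner J y y'.
Proof.
  intros Hx Hx' Hy Hy' Hu Exy Exy'.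
  apply (Rmult_eq_reg_l (NR J)); [| pose proof (NR_pos J); lra].
  rewrite !parseval by auto. f_equal. apply csum_ext; intros n Hn.
  rewrite Exy, Exy', unimodular_mul_conj; auto.
Qed.

Lemma multiplier_tshift (u : nat -> C) (x y : Z -> R) (a : Z) :
  periodic J x -> periodic J y ->
  (forall n, (n < N)%nat -> DFT J x n = Cmul (u n) (DFT J y n)) ->
  forall n, (n < N)%nat -> DFT J (tshift x a) n = Cmul (u n) (DFT J (tshift y a) n).
Proof.
  intros Hx Hy Exy n Hn.
  rewrite !dft_shift, Exy by auto.
  generalize (omega_pow J (- (IZR a * INR n))) (u n) (DFT J y n). intros. Csolve.
Qed.

Lemma Hilbert_by_dft (x y : Z -> R) :
  periodic J x ->
  (forall n, (n < N)%nat -> DFT J x n = Cmul (hmult J n) (DFT J y n)) ->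
  forall k, x k = Hilbert J y k.
Proof.
  intros Hx Exy k. pose proof (NR_pos J).
  unfold Hilbert.
  rewrite (csum_ext _ _ (fun n => Cmul (DFT J x n) (omega_pow J (IZR k * INR n))))
    by (intros n Hn; rewrite Exy; auto).
  rewrite dft_inversion by auto. unfold Cre, RtoC; simpl. field. lra.
Qed.

Lemma orthonormal_expansion (e : nat -> Z -> R) :
  (forall i, (i < N)%nat -> periodic J (e i)) ->
  (forall i j, (i < N)%nat -> (j < N)%nat ->
     inner J (e i) (e j) = if (i =? j)%nat then 1 else 0) ->
  forall x, periodic J x -> forall k, x k = rsum N (fun i => inner J x (e i) * e i k).
Proof.
  intros Hper Horth x Hx k.
  pose proof (Z.mod_pos_bound k (Z.of_nat N) ltac:(pose proof (Nn_pos J); lia)) as Hb.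
  set (k0 := Z.to_nat (k mod Z.of_nat N)).
  assert (Hk0 : (k0 < N)%nat) by (unfold k0; lia).
  assert (Ek : forall z, periodic J z -> z k = z (Z.of_nat k0)).
  { intros z Hz. unfold k0. rewrite Z2Nat.id by lia. apply periodic_mod; auto. }
  assert (Hcol : forall j, (j < N)%nat ->
     rsum N (fun i => e i (Z.of_nat j) * e i (Z.of_nat k0)) = if (j =? k0)%nat then 1 else 0).
  { intros j Hj. apply (RowsToColumns.orthonormal_columns N (fun i j => e i (Z.of_nat j)));
      auto. }
  rewrite (rsum_ext _ _ (fun i => rsum N (fun j =>
     x (Z.of_nat j) * (e i (Z.of_nat j) * e i (Z.of_nat k0))))).
  - rewrite rsum_exchange, Ek by auto.
    rewrite (rsum_single _ _ k0 Hk0).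
    + rewrite <- rsum_mult_l, Hcol, Nat.eqb_refl by auto. ring.
    + intros j Hj Hne. rewrite <- rsum_mult_l, Hcol, (proj2 (Nat.eqb_neq j k0) Hne) by auto.
      ring.
  - intros i Hi. rewrite (Ek (e i)) by auto. unfold inner. rewrite rsum_mult_r.
    apply rsum_ext; intros; ring.
Qed.

Lemma orthonormal_expansion_blocks (M B : nat) (f : nat -> nat -> Z -> R) :
  N = (M * B)%nat ->
  (forall l p, (l < M)%nat -> (p < B)%nat -> periodic J (f l p)) ->
  (forall l l' p p', (l < M)%nat -> (l' < M)%nat -> (p < B)%nat -> (p' < B)%nat ->
     inner J (f l p) (f l' p') = if ((l =? l') && (p =? p'))%nat then 1 else 0) ->
  forall x, periodic J x -> forall k,
    x k = rsum M (fun l => rsum B (fun p => inner J x (f l p) * f l p k)).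
Proof.
  intros HN Hper Horth x Hx k.
  assert (HB : (0 < B)%nat) by (pose proof (Nn_pos J); destruct B; lia).
  set (e := fun i => f (i / B)%nat (i mod B)%nat).
  assert (Hlt : forall i, (i < N)%nat -> (i / B < M)%nat /\ (i mod B < B)%nat).
  { intros i Hi. split; [apply Nat.Div0.div_lt_upper_bound | apply Nat.mod_upper_bound]; lia. }
  assert (He : forall i, (i < N)%nat -> periodic J (e i)).
  { intros i Hi. apply Hper; apply Hlt; auto. }
  assert (Ho : forall i j, (i < N)%nat -> (j < N)%nat ->
     inner J (e i) (e j) = if (i =? j)%nat then 1 else 0).
  { intros i j Hi Hj. unfold e. rewrite Horth by (apply Hlt; auto).
    pose proof (Nat.div_mod_eq i B). pose proof (Nat.div_mod_eq j B).
    destruct (Nat.eqb_spec i j) as [->|E]; [rewrite !Nat.eqb_refl; auto|].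
    destruct (Nat.eqb_spec (i / B) (j / B)); destruct (Nat.eqb_spec (i mod B) (j mod B));
      simpl; auto.
    exfalso. apply E. lia. }
  rewrite (orthonormal_expansion e He Ho x Hx k), HN, rsum_blocks.
  apply rsum_ext; intros l Hl. apply rsum_ext; intros p Hp.
  unfold e. rewrite Nat.div_add_l, Nat.div_small, Nat.add_0_r by lia.
  rewrite Nat.add_comm, Nat.Div0.mod_add, Nat.mod_small by lia. auto.
Qed.
End Consequences.

Lemma pow2_pred k : (1 <= k)%nat -> (2 ^ k = 2 * 2 ^ (k - 1))%nat.
Proof. intros Hk. replace k with (S (k - 1)) at 1 by lia. apply Nat.pow_succ_r'. Qed.

Lemma pow2_pos k : (1 <= 2 ^ k)%nat.
Proof. apply Nat.neq_0_lt_0, Nat.pow_nonzero. lia. Qed.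

Lemma Nn_half J : (1 <= J)%nat -> (Nn J / 2 = 2 ^ (J - 1))%nat /\ NR J = 2 * INR (2 ^ (J - 1)).
Proof.
  intros HJ. unfold NR, Nn. rewrite (pow2_pred J HJ), mult_INR.
  split; auto. rewrite Nat.mul_comm, Nat.div_mul; lia.
Qed.

Section PacketZeros.
Variables J r : nat.
Hypothesis Hr : (1 <= r)%nat.

Lemma alphaf_zero n : sin (PI * INR n / NR J) = 0 -> alphaf J r n = C0.
Proof.
  intros Hs. unfold alphaf. rewrite Hs, pow_i by lia. unfold Rdiv. rewrite Rmult_0_l.
  generalize (omega_pow J (INR n)); intros; Csolve.
Qed.

Lemma betaf_zero n : cos (PI * INR n / NR J) = 0 -> betaf J r n = C0.
Proof. intros Hc. unfold betaf. rewrite Hc, pow_i by lia. unfold Rdiv. rewrite Rmult_0_l. auto. Qed.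

Lemma betaf_half : (1 <= J)%nat -> betaf J r (Nn J / 2) = C0.
Proof.
  intros HJ. destruct (Nn_half J HJ) as [Hh HN]. pose proof (NR_pos J).
  apply betaf_zero. rewrite Hh.
  replace (PI * INR (2 ^ (J - 1)) / NR J) with (PI / 2) by (rewrite HN; field; lra).
  apply cos_PI2.
Qed.

Lemma alphaf_0 : alphaf J r 0 = C0.
Proof. apply alphaf_zero. unfold Rdiv. rewrite Rmult_0_r, Rmult_0_l. apply sin_0. Qed.

Lemma alphaf_half_multiple k : (1 <= J)%nat -> (1 <= k)%nat ->
  alphaf J r (2 ^ k * (Nn J / 2)) = C0.
Proof.
  intros HJ Hk. destruct (Nn_half J HJ) as [Hh HN]. pose proof (NR_pos J).
  apply alphaf_zero, sin_eq_0_1. exists (Z.of_nat (2 ^ (k - 1))).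
  rewrite Hh, <- INR_IZR_INZ, mult_INR, (pow2_pred k Hk), mult_INR, HN.
  simpl (INR 2). field. lra.
Qed.

Lemma psihat_at_0 m l : (l < 2 ^ m)%nat -> l <> 0%nat -> psihat J r m l 0 = C0.
Proof.
  revert l. induction m as [|m IH]; intros l Hl Hl0; [simpl in Hl; lia|].
  cbn [psihat]. rewrite Nat.pow_succ_r' in Hl.
  destruct (Nat.eq_dec (l / 2) 0) as [E|E].
  - (* l = 1, so the factor is alpha[0] *)
    pose proof (Nat.div_mod_eq l 2). pose proof (Nat.mod_upper_bound l 2 ltac:(lia)).
    replace (mu_of l) with 1%nat by (unfold mu_of; rewrite E; cbn [Nat.even]; lia).
    unfold gammaf; cbn [Nat.eqb]. rewrite Nat.mul_0_r, alphaf_0. apply Cmul_0_l.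
  - rewrite IH; [apply Cmul_0_r | apply Nat.Div0.div_lt_upper_bound; lia | auto].
Qed.

Lemma psihat_at_half m l : (1 <= J)%nat -> (1 <= m)%nat ->
  (l < 2 ^ m)%nat -> l <> (2 ^ m - 1)%nat -> psihat J r m l (Nn J / 2) = C0.
Proof.
  intros HJ. revert l. induction m as [|m IH]; intros l Hm Hl Hltop; [lia|].
  cbn [psihat]. rewrite Nat.pow_succ_r' in Hl, Hltop.
  pose proof (Nat.div_mod_eq l 2). pose proof (Nat.mod_upper_bound l 2 ltac:(lia)).
  destruct (Nat.eq_dec m 0) as [->|Hm0].
  - (* level 1: l = 0 and the factor is beta[N/2] *)
    replace l with 0%nat by (simpl in *; lia).
    unfold gammaf, mu_of; cbn [Nat.pow Nat.eqb Nat.even]. rewrite Nat.mul_1_l, betaf_half by auto.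
    apply Cmul_0_l.
  - unfold gammaf. destruct (Nat.eqb_spec (mu_of l) 0) as [Hmu|Hmu].
    + rewrite IH; [apply Cmul_0_r | lia | apply Nat.Div0.div_lt_upper_bound; lia |].
      (* l / 2 = 2^m - 1 is odd, so mu_of l = 0 forces l = 2^(m+1) - 1 *)
      intros Htop. apply Hltop. unfold mu_of in Hmu.
      replace (Nat.even (l / 2)) with false in Hmu.
      * pose proof (pow2_pos m). lia.
      * rewrite Htop, (pow2_pred m), <- Nat.negb_odd by lia. symmetry.
        apply negb_false_iff, Nat.odd_spec. exists (2 ^ (m - 1) - 1)%nat.
        pose proof (pow2_pos (m - 1)). lia.
    + rewrite alphaf_half_multiple by lia. apply Cmul_0_l.
Qed.
End PacketZeros.

Definition phase (J n : nat) : C :=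
  let n' := (n mod Nn J)%nat in
  let h := (Nn J / 2)%nat in
  if (0 <? n')%nat && (n' <? h)%nat then Copp Ci
  else if (h <? n')%nat then Ci
  else C1.

Lemma phihat_phase J r m l n : phihat J r m l n = Cmul (phase J n) (psihat J r m l n).
Proof.
  unfold phihat, phase. destruct (_ && _); auto. destruct (_ <? _)%nat; auto.
  generalize (psihat J r m l n); intros; Csolve.
Qed.

Lemma phase_unimodular J n : unimodular (phase J n).
Proof. unfold phase, unimodular. destruct (_ && _); [|destruct (_ <? _)%nat]; simpl; ring. Qed.

(** For [1 <= l <= 2^m - 2], [psihat] vanishes at [0] and [N/2], exactly where
    [phase] and the Hilbert multiplier differ. *)
Lemma phihat_hmult J r m l n : (1 <= J)%nat -> (1 <= r)%nat -> (1 <= m)%nat ->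
  (1 <= l)%nat -> (l <= 2 ^ m - 2)%nat -> (n < Nn J)%nat ->
  phihat J r m l n = Cmul (hmult J n) (psihat J r m l n).
Proof.
  intros HJ Hr Hm Hl1 Hl2 Hn. pose proof (pow2_pos m).
  unfold phihat, hmult. rewrite Nat.mod_small by auto.
  destruct ((0 <? n)%nat && (n <? Nn J / 2)%nat) eqn:E1; auto.
  destruct (Nn J / 2 <? n)%nat eqn:E2; auto.
  rewrite Cmul_0_l.
  apply andb_false_iff in E1. rewrite Nat.ltb_ge in E2.
  destruct E1 as [E1|E1]; rewrite Nat.ltb_ge in E1.
  - replace n with 0%nat by lia. apply psihat_at_0; lia.
  - replace n with (Nn J / 2)%nat by lia. apply psihat_at_half; lia.
Qed.

Theorem proposition3p3 (J r m : nat) (psi phi : nat -> Z -> R) :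
  (1 <= J)%nat -> (1 <= r)%nat -> (1 <= m)%nat -> (m <= J)%nat ->
  (* psi l = psi_[m],l : the element of Pi[N] with DFT psihat m l *)
  (forall l, (l < 2 ^ m)%nat ->
     periodic J (psi l) /\ forall n, DFT J (psi l) n = psihat J r m l n) ->
  (* phi l = phi_[m],l : the element of Pi[N] with DFT phihat m l *)
  (forall l, (l < 2 ^ m)%nat ->
     periodic J (phi l) /\ forall n, DFT J (phi l) n = phihat J r m l n) ->
  (* known fact (assumable): the shifts of psi_[m],l form an orthonormal system *)
  (forall l lam p s, (l < 2 ^ m)%nat -> (lam < 2 ^ m)%nat ->
     (p < 2 ^ (J - m))%nat -> (s < 2 ^ (J - m))%nat ->
     inner J (tshift (psi l) (Z.of_nat (2 ^ m * p))) (tshift (psi lam) (Z.of_nat (2 ^ m * s)))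
     = if ((l =? lam) && (p =? s))%nat then 1 else 0) ->
  (* (i) *)
  (forall l n, (l < 2 ^ m)%nat -> Cmod (DFT J (phi l) n) = Cmod (DFT J (psi l) n))
  (* (ii) *)
  /\ (forall l, (1 <= l)%nat -> (l <= 2 ^ m - 2)%nat ->
        forall k, phi l k = Hilbert J (psi l) k)
  (* (iii) orthonormality *)
  /\ (forall l lam p s, (l < 2 ^ m)%nat -> (lam < 2 ^ m)%nat ->
        (p < 2 ^ (J - m))%nat -> (s < 2 ^ (J - m))%nat ->
        inner J (tshift (phi l) (Z.of_nat (2 ^ m * p))) (tshift (phi lam) (Z.of_nat (2 ^ m * s)))
        = if ((l =? lam) && (p =? s))%nat then 1 else 0)
  (* ... and it is a basis of Pi[N]: every x in Pi[N] expands in it *)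
  /\ (forall x : Z -> R, periodic J x -> forall k : Z,
        x k = rsum (2 ^ m) (fun l => rsum (2 ^ (J - m)) (fun p =>
                inner J x (tshift (phi l) (Z.of_nat (2 ^ m * p)))
                * tshift (phi l) (Z.of_nat (2 ^ m * p)) k))).
Proof.
  intros HJ Hr Hm HmJ Hpsi Hphi Horth.
  assert (Hdft : forall l n, (l < 2 ^ m)%nat ->
            DFT J (phi l) n = Cmul (phase J n) (DFT J (psi l) n)).
  { intros l n Hl. rewrite (proj2 (Hphi l Hl)), (proj2 (Hpsi l Hl)). apply phihat_phase. }
  assert (Hortho : forall l lam p s, (l < 2 ^ m)%nat -> (lam < 2 ^ m)%nat ->
        (p < 2 ^ (J - m))%nat -> (s < 2 ^ (J - m))%nat ->
        inner J (tshift (phi l) (Z.of_nat (2 ^ m * p))) (tshift (phi lam) (Z.of_nat (2 ^ m * s)))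
        = if ((l =? lam) && (p =? s))%nat then 1 else 0).
  { intros l lam p s Hl Hlam Hp Hs. rewrite <- Horth by auto.
    destruct (Hphi l Hl), (Hphi lam Hlam), (Hpsi l Hl), (Hpsi lam Hlam).
    apply (inner_unimodular_multiplier J (phase J)).
    1-4: apply tshift_periodic; auto.
    - intros; apply phase_unimodular.
    - apply multiplier_tshift; auto.
    - apply multiplier_tshift; auto. }
  split; [| split; [| split]].
  - intros l n Hl. rewrite Hdft by auto. apply Cmod_unimodular, phase_unimodular.
  - intros l Hl1 Hl2. assert (Hl : (l < 2 ^ m)%nat) by (pose proof (pow2_pos m); lia).
    apply Hilbert_by_dft; [apply Hphi; auto |]. intros n Hn.
    rewrite (proj2 (Hphi l Hl)), (proj2 (Hpsi l Hl)). apply phihat_hmult; auto.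
  - exact Hortho.
  - apply orthonormal_expansion_blocks; auto.
    + unfold Nn. rewrite <- Nat.pow_add_r. f_equal. lia.
    + intros l p Hl _. apply tshift_periodic, Hphi; auto.
Qed.
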